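(* Let $G$ be a digraph with a fixed upward planar drawing and let $s,t\in V(G)$ be such that there is a directed path from $s$ to $t$. Then there is a unique right-most $s$-$t$ path in $G$.
   Context: An upward planar drawing of a digraph is a plane drawing (no edge crossings) in which every directed edge is a curve monotone increasing in the $y$-direction from tail to head. A path is identified with the set of points of $\mathbb{R}^2$ in its drawing. For a path $P$ with endpoints $(x,y)$, $(x',y')$, $y\le y'$, let $\mathrm{Right}(P):=\{(u,v)\in\mathbb{R}^2: y\le v\le y',\ u'<u \text{ for all } u' \text{ with } (u',v)\in P\}$. A right-most $s$-$t$ path is a directed $s$-$t$ path $P$ such that for all directed $s$-$t$ paths $P'$, $P\subseteq P'\cup\mathrm{Right}(P')$. *)

From Stdlib Require Import Reals.
From mathcomp Require Import all_boot.

Set Implicit Arguments.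
Unset Strict Implicit.
Unset Printing Implicit Defensive.
Local Open Scope R_scope.

(* Points of the plane R^2: (x-coordinate, y-coordinate). *)
Definition point := (R * R)%type.

Definition in01 (a : R) : Prop := (0 <= a <= 1).

(* A drawing consists of vertex positions  pos : V -> point  and, for each
   edge x -> y, a curve  crv x y : R -> point  (parametrised on [0,1];
   the values outside [0,1] are irrelevant, we only ask continuity). *)
Definition upward_planar_drawing (V : finType) (E : rel V)
    (pos : V -> point) (crv : V -> V -> R -> point) : Prop :=
  injective pos /\
  (forall x y, E x y ->
     crv x y 0 = pos x /\ crv x y 1 = pos y /\
     (forall a, continuity_pt (fun b => fst (crv x y b)) a /\
                continuity_pt (fun b => snd (crv x y b)) a) /\
     (forall a b, (0 <= a) -> (a < b) -> (b <= 1) ->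
        (snd (crv x y a) < snd (crv x y b)))) /\
  (forall x y w a, E x y -> (0 < a < 1) -> crv x y a <> pos w) /\
  (forall x y x' y' a b, E x y -> E x' y' -> (x, y) <> (x', y') ->
     in01 a -> in01 b -> crv x y a = crv x' y' b ->
     exists w, crv x y a = pos w /\ (w = x \/ w = y) /\ (w = x' \/ w = y')).

(* A directed path x :: p (vertex sequence starting at x) from s to t:
   consecutive vertices are joined by edges, no repeated vertex. *)
Definition dipath (V : finType) (E : rel V) (s t : V) (p : seq V) : Prop :=
  path E s p /\ last s p = t /\ uniq (s :: p).

Fixpoint path_pts (V : finType) (pos : V -> point) (crv : V -> V -> R -> point)
    (x : V) (p : seq V) : point -> Prop :=
  match p with
  | [::] => fun z => z = pos x
  | y :: p' => fun z => (exists a, in01 a /\ z = crv x y a) \/ path_pts pos crv y p' z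
  end.

Definition Right_of (P : point -> Prop) (lo hi : R) : point -> Prop :=
  fun z => (lo <= snd z <= hi) /\
           (forall u', P (u', snd z) -> (u' < fst z)).

Definition Right_path (V : finType) (pos : V -> point) (crv : V -> V -> R -> point)
    (s t : V) (p : seq V) : point -> Prop :=
  Right_of (path_pts pos crv s p)
           (Rmin (snd (pos s)) (snd (pos t))) (Rmax (snd (pos s)) (snd (pos t))).

Definition rightmost (V : finType) (E : rel V) (pos : V -> point)
    (crv : V -> V -> R -> point) (s t : V) (p : seq V) : Prop :=
  dipath E s t p /\
  forall p', dipath E s t p' ->
    forall z, path_pts pos crv s p z ->
      path_pts pos crv s p' z \/ Right_path pos crv s t p' z.

(* Each edge, parametrised by height, makes every directed path the graph
   x = X(y) of a continuous function over its height range.  Two s-c paths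
   meeting only at s and c cannot cross: by the intermediate value theorem a
   crossing would be a common inner point, i.e. a crossing of two edges.  So
   one of them lies weakly to the right of the other.  Cutting two s-t paths at
   their common vertices and keeping the right-hand piece each time yields an
   s-t path to the right of both, and iterating over the finitely many s-t
   paths yields a right-most one.  Two right-most paths have the same point
   set, hence the same vertex sequence. *)

From Stdlib Require Import Reals Lra Psatz ClassicalEpsilon Classical.
From mathcomp Require Import all_boot.

Set Implicit Arguments.
Unset Strict Implicit.
Unset Printing Implicit Defensive.
Local Open Scope R_scope.

Definition clamp (lo hi h : R) : R := Rmax lo (Rmin h hi).

Lemma clamp_id lo hi h : lo <= h <= hi -> clamp lo hi h = h.
Proof. by rewrite /clamp /Rmax /Rmin; case: Rle_dec; case: Rle_dec; lra. Qed.

Lemma clamp_in lo hi h : lo <= hi -> lo <= clamp lo hi h <= hi.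
Proof. by rewrite /clamp /Rmax /Rmin; case: Rle_dec; case: Rle_dec; lra. Qed.

Lemma clamp_le lo hi h h' : h <= h' -> clamp lo hi h <= clamp lo hi h'.
Proof. by rewrite /clamp /Rmax /Rmin; do 4 case: Rle_dec; lra. Qed.

Lemma continuity_Rmin_l c : continuity (fun h => Rmin h c).
Proof.
move=> h eps Heps; exists eps; split=> // x [_ /= Hx].
rewrite /R_dist in Hx *; move: (Rabs_def2 _ _ Hx).
by rewrite /Rmin; case: Rle_dec; case: Rle_dec => *; apply: Rabs_def1; lra.
Qed.

Lemma continuity_Rmax_l c : continuity (fun h => Rmax h c).
Proof.
move=> h eps Heps; exists eps; split=> // x [_ /= Hx].
rewrite /R_dist in Hx *; move: (Rabs_def2 _ _ Hx).
by rewrite /Rmax; case: Rle_dec; case: Rle_dec => *; apply: Rabs_def1; lra.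
Qed.

Lemma nondecreasing_onto_continuity (g : R -> R) lo hi :
  (forall h h', h <= h' -> g h <= g h') -> (forall h, lo <= g h <= hi) ->
  (forall a, lo <= a <= hi -> exists h, g h = a) -> continuity g.
Proof.
move=> g_le g_in g_onto h0 eps Heps.
have [d1 [Hd1 below]] : exists d, 0 < d /\ forall x, h0 - d < x -> g h0 - eps < g x.
  case: (Rle_dec (g h0 - eps / 2) lo) => Hlo.
    by exists 1; split=> [|x _]; [lra | have := g_in x; lra].
  have [h1 Hh1] := g_onto (g h0 - eps / 2) ltac:(have := g_in h0; lra).
  have h10 : h1 < h0 by apply: Rnot_le_lt => /g_le; lra.
  by exists (h0 - h1); split=> [|x Hx]; [lra | have := g_le h1 x ltac:(lra); lra].
have [d2 [Hd2 above]] : exists d, 0 < d /\ forall x, x < h0 + d -> g x < g h0 + eps.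
  case: (Rle_dec hi (g h0 + eps / 2)) => Hhi.
    by exists 1; split=> [|x _]; [lra | have := g_in x; lra].
  have [h1 Hh1] := g_onto (g h0 + eps / 2) ltac:(have := g_in h0; lra).
  have h01 : h0 < h1 by apply: Rnot_le_lt => /g_le; lra.
  by exists (h1 - h0); split=> [|x Hx]; [lra | have := g_le x h1 ltac:(lra); lra].
exists (Rmin d1 d2); split; first exact: Rmin_pos.
move=> x [_ /= Hx]; rewrite /R_dist in Hx *; apply: Rabs_def1.
- have [Hx1 Hx2] := Rabs_def2 _ _ Hx; have := Rmin_r d1 d2; have := above x; lra.
- have [Hx1 Hx2] := Rabs_def2 _ _ Hx; have := Rmin_l d1 d2; have := below x; lra.
Qed.

Lemma increasing_continuous_inverse (f : R -> R) :
  continuity f -> (forall a b, 0 <= a -> a < b -> b <= 1 -> f a < f b) ->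
  exists g, continuity g /\ forall h, f 0 <= h <= f 1 -> in01 (g h) /\ f (g h) = h.
Proof.
move=> f_cont f_lt.
have f_le a b : 0 <= a -> a <= b -> b <= 1 -> f a <= f b.
  by move=> Ha /Rle_lt_or_eq_dec [Hab|->] Hb; [left; apply: f_lt | right].
have f_inj a b : in01 a -> in01 b -> f a = f b -> a = b.
  move=> [Ha0 Ha1] [Hb0 Hb1] Hf; case: (Rtotal_order a b) => [Hab|[//|Hab]].
  - by have := f_lt a b Ha0 Hab Hb1; lra.
  - by have := f_lt b a Hb0 Hab Ha1; lra.
have f01 : f 0 <= f 1 by apply: f_le; lra.
(* Clamping the value to [f 0, f 1] makes the inverse total and nondecreasing. *)
have hit h : exists a, in01 a /\ f a = clamp (f 0) (f 1) h.
  have := clamp_in h f01; set c := clamp _ _ h => Hc.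
  have [a [Ha /= Hfa]] := IVT_cor (fun a => f a - c) 0 1
    (continuity_minus _ _ f_cont (continuity_const (fun _ => c) (fun _ _ => erefl)))
    ltac:(lra) ltac:(rewrite /=; nra).
  by exists a; split; [exact: Ha | lra].
pose g h := proj1_sig (constructive_indefinite_description _ (hit h)).
have g_spec h : in01 (g h) /\ f (g h) = clamp (f 0) (f 1) h.
  exact: proj2_sig (constructive_indefinite_description _ (hit h)).
exists g; split; last first.
  by move=> h Hh; have [Hg Hfg] := g_spec h; rewrite Hfg clamp_id.
apply: (nondecreasing_onto_continuity (lo := 0) (hi := 1)).
- move=> h h' Hh; apply: Rnot_lt_le => Hlt.
  have [[Hg0 Hg1] Hfg] := g_spec h; have [[Hg0' Hg1'] Hfg'] := g_spec h'.
  by have := f_lt _ _ Hg0' Hlt Hg1; have := clamp_le (f 0) (f 1) Hh; lra.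
- by move=> h; case: (g_spec h).
- move=> a Ha; exists (f a); apply: f_inj => //; first by case: (g_spec (f a)).
  rewrite (proj2 (g_spec (f a))) clamp_id //.
  by split; apply: f_le; lra.
Qed.

Lemma continuous_graphs_cross (X Y : R -> R) h1 h2 :
  continuity X -> continuity Y -> X h1 < Y h1 -> Y h2 < X h2 ->
  exists h, Rmin h1 h2 <= h <= Rmax h1 h2 /\ X h = Y h.
Proof.
move=> X_cont Y_cont lt1 lt2.
have D_cont : continuity (fun h => X h - Y h) by apply: continuity_minus.
case: (Rle_dec h1 h2) => h12.
- have [h [Hh /= Dh]] := IVT_cor _ h1 h2 D_cont h12 ltac:(rewrite /=; nra).
  by exists h; rewrite Rmin_left ?Rmax_right //; split; lra.
- have [h [Hh /= Dh]] := IVT_cor _ h2 h1 D_cont ltac:(lra) ltac:(rewrite /=; nra).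
  by exists h; rewrite Rmin_right ?Rmax_left; try lra; split; lra.
Qed.

Definition lies_right_of (A B : point -> Prop) : Prop :=
  forall z w, A z -> B w -> snd z = snd w -> fst w <= fst z.

Lemma lies_right_of_graphs (P Q : point -> Prop) (X Y : R -> R) lo hi :
  (forall z, P z -> lo <= snd z <= hi) ->
  (forall z, P z -> z = (X (snd z), snd z)) -> (forall w, Q w -> w = (Y (snd w), snd w)) ->
  (forall h, lo <= h <= hi -> Y h <= X h) -> lies_right_of P Q.
Proof.
move=> P_range P_graph Q_graph YX z w Hz Hw Hzw.
by rewrite (P_graph z Hz) (Q_graph w Hw) /= -Hzw; apply/YX/P_range.
Qed.

Fixpoint seqs_upto (T : finType) (n : nat) : seq (seq T) :=
  if n is n'.+1 then [::] :: [seq x :: r | x <- enum T, r <- seqs_upto T n'] else [:: [::]].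

Lemma mem_seqs_upto (T : finType) n (r : seq T) : (size r <= n)%N -> r \in seqs_upto T n.
Proof.
elim: n r => [|n IHn] [|x r] //= size_r.
by rewrite in_cons; apply/orP; right; apply: allpairs_f; [exact: mem_enum | exact: IHn].
Qed.

Section UpwardPlanarDrawing.

Variables (V : finType) (E : rel V) (pos : V -> point) (crv : V -> V -> R -> point).
Hypothesis drawing : upward_planar_drawing E pos crv.

Local Notation pts := (path_pts pos crv).

Lemma edge_curve_ends x y : E x y -> crv x y 0 = pos x /\ crv x y 1 = pos y.
Proof. by case: drawing => _ [Hedge _] /Hedge [H0 [H1 _]]. Qed.

Lemma edge_curve_continuity x y :
  E x y -> continuity (fun a => fst (crv x y a)) /\ continuity (fun a => snd (crv x y a)).
Proof.
by case: drawing => _ [Hedge _] /Hedge [_ [_ [Hc _]]]; split=> a; case: (Hc a).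
Qed.

Lemma edge_curve_increasing x y a b :
  E x y -> 0 <= a -> a < b -> b <= 1 -> snd (crv x y a) < snd (crv x y b).
Proof. by case: drawing => _ [Hedge _] /Hedge [_ [_ [_ Hlt]]]; apply: Hlt. Qed.

Lemma edge_curve_height_inj x y a b :
  E x y -> in01 a -> in01 b -> snd (crv x y a) = snd (crv x y b) -> a = b.
Proof.
move=> Exy [Ha0 Ha1] [Hb0 Hb1] Hab; case: (Rtotal_order a b) => [lt_ab|[//|lt_ba]].
- by have := edge_curve_increasing Exy Ha0 lt_ab Hb1; lra.
- by have := edge_curve_increasing Exy Hb0 lt_ba Ha1; lra.
Qed.

Lemma edge_curve_height x y a :
  E x y -> in01 a -> snd (pos x) <= snd (crv x y a) <= snd (pos y).
Proof.
move=> Exy [Ha0 Ha1]; have [<- <-] := edge_curve_ends Exy.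
split; [case: (Rle_lt_or_eq_dec _ _ Ha0) => [Ha|<-] | case: (Rle_lt_or_eq_dec _ _ Ha1) => [Ha|->]];
  by [left; apply: (edge_curve_increasing Exy); lra | right].
Qed.

Lemma edge_height_lt x y : E x y -> snd (pos x) < snd (pos y).
Proof.
by move=> Exy; have [<- <-] := edge_curve_ends Exy; apply: (edge_curve_increasing Exy); lra.
Qed.

Lemma path_height_lt s p : path E s p -> {in p, forall v, snd (pos s) < snd (pos v)}.
Proof.
elim: p s => [|x p IHp] s //= /andP [Esx Hp] v; rewrite in_cons => /predU1P [->|Hv].
  exact: edge_height_lt.
exact: Rlt_trans (edge_height_lt Esx) (IHp _ Hp _ Hv).
Qed.

Lemma last_height_lt s p : path E s p -> p != [::] -> snd (pos s) < snd (pos (last s p)).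
Proof. by case: p => [|x p] // Hp _; apply: (path_height_lt Hp); rewrite /= mem_last. Qed.

Lemma last_height_le s p : path E s p -> snd (pos s) <= snd (pos (last s p)).
Proof. by case: p => [|x p] Hp; [right | left; apply: last_height_lt]. Qed.

Lemma path_last_nil s p : path E s p -> last s p = s -> p = [::].
Proof.
by move=> Hp Hlast; case: (eqVneq p [::]) => // /(last_height_lt Hp); rewrite Hlast; lra.
Qed.

Lemma upward_path_uniq s p : path E s p -> uniq (s :: p).
Proof.
elim: p s => [|x p IHp] s // Hp; have /andP [_ Hp'] := Hp.
by rewrite cons_uniq IHp // andbT; apply/negP => /(path_height_lt Hp); lra.
Qed.

Lemma dipathP s t p : dipath E s t p <-> path E s p /\ last s p = t.
Proof.
split=> [[Hp [Hlast _]] // | [Hp Hlast]].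
by split=> //; split=> //; apply: upward_path_uniq.
Qed.

Lemma path_pts_head s p : path E s p -> pts s p (pos s).
Proof.
case: p => [|x p] //= /andP [Esx _]; left; exists 0.
by split; [split; lra | have [-> _] := edge_curve_ends Esx].
Qed.

Lemma path_pts_last s p : pts s p (pos (last s p)).
Proof. by elim: p s => [|x p IHp] s //=; right. Qed.

Lemma path_pts_height s p z :
  path E s p -> pts s p z -> snd (pos s) <= snd z <= snd (pos (last s p)).
Proof.
elim: p s => [|x p IHp] s /=; first by move=> _ ->; lra.
move=> /andP [Esx Hp] [[a [Ha ->]] | Hz].
- by have := edge_curve_height Esx Ha; have := last_height_le Hp; lra.
- by have := IHp _ Hp Hz; have := edge_height_lt Esx; lra.
Qed.

Lemma path_pts_at_head s p z :
  path E s p -> pts s p z -> snd z = snd (pos s) -> z = pos s.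
Proof.
case: p => [|x p] //= /andP [Esx Hp] [[a [Ha ->]] | Hz] Hheight.
- have [H0 _] := edge_curve_ends Esx.
  suff -> : a = 0 by [].
  by apply: (edge_curve_height_inj Esx Ha); [split; lra | rewrite H0].
- by have := path_pts_height Hp Hz; have := edge_height_lt Esx; lra.
Qed.

Lemma path_pts_height_inj s p z z' :
  path E s p -> pts s p z -> pts s p z' -> snd z = snd z' -> z = z'.
Proof.
elim: p s => [|x p IHp] s /=; first by move=> _ -> ->.
move=> /andP [Esx Hp].
have at_x a : in01 a -> snd (crv s x a) = snd (pos x) -> crv s x a = pos x.
  move=> Ha Hheight; have [_ H1] := edge_curve_ends Esx.
  suff -> : a = 1 by [].
  by apply: (edge_curve_height_inj Esx Ha); [split; lra | rewrite H1].
have edge_path a w : in01 a -> pts x p w -> snd (crv s x a) = snd w -> crv s x a = w.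
  move=> Ha Hw Hheight.
  have := edge_curve_height Esx Ha; have := path_pts_height Hp Hw => H1 H2.
  have -> : w = pos x by apply: (path_pts_at_head Hp Hw); lra.
  by apply: at_x => //; lra.
move=> [[a [Ha ->]] | Hz] [[b [Hb ->]] | Hz'] Hheight.
- by rewrite (edge_curve_height_inj Esx Ha Hb Hheight).
- exact: edge_path.
- by apply/esym/edge_path.
- exact: IHp Hp Hz Hz' Hheight.
Qed.

Lemma path_pts_at_last s p z :
  path E s p -> pts s p z -> snd z = snd (pos (last s p)) -> z = pos (last s p).
Proof. by move=> Hp Hz; apply: (path_pts_height_inj Hp Hz (path_pts_last s p)). Qed.

Lemma path_pts_cat s p q z :
  path E s (p ++ q) -> pts s (p ++ q) z <-> pts s p z \/ pts (last s p) q z.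
Proof.
elim: p s => [|x p IHp] s /=.
  by move=> Hq; split=> [|[->|//]]; [right | apply: path_pts_head].
by move=> /andP [_ Hpq]; rewrite (IHp _ Hpq); tauto.
Qed.

Lemma path_pts_on_edge s p z :
  path E s p -> pts s p z -> p != [::] ->
  exists x y a p1 p2, s :: p = p1 ++ x :: y :: p2 /\ E x y /\ in01 a /\ z = crv x y a.
Proof.
elim: p s => [|x p IHp] s //= /andP [Esx Hp] [[a [Ha ->]] | Hz] _.
  by exists s, x, a, [::], p.
case: p IHp Hp Hz => [|y p] IHp Hp Hz.
  exists s, x, 1, [::], [::]; split=> //; split=> //; split; first by split; lra.
  by rewrite Hz; have [_ ->] := edge_curve_ends Esx.
have [x' [y' [a [p1 [p2 [-> Hrest]]]]]] := IHp x Hp Hz isT.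
by exists x', y', a, (s :: p1), p2.
Qed.

Lemma edge_graph x y :
  E x y -> exists X, continuity X /\
    forall h, snd (pos x) <= h <= snd (pos y) -> exists a, in01 a /\ crv x y a = (X h, h).
Proof.
move=> Exy; have [fst_cont snd_cont] := edge_curve_continuity Exy.
have [g [g_cont g_inv]] :=
  increasing_continuous_inverse snd_cont (fun a b => edge_curve_increasing Exy).
exists (fun h => fst (crv x y (g h))); split; first exact: continuity_comp g_cont fst_cont.
move=> h; have [<- <-] := edge_curve_ends Exy => /g_inv [Ha Hg].
by exists (g h); split=> //; apply: injective_projections.
Qed.

Lemma path_graph s p :
  path E s p -> exists X, continuity X /\
    (forall h, snd (pos s) <= h <= snd (pos (last s p)) -> pts s p (X h, h)) /\
    (forall z, pts s p z -> z = (X (snd z), snd z)).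
Proof.
move=> Hp; suff [X [X_cont X_on]] : exists X, continuity X /\
    forall h, snd (pos s) <= h <= snd (pos (last s p)) -> pts s p (X h, h).
  exists X; split=> //; split=> // z Hz.
  exact: path_pts_height_inj Hp Hz (X_on _ (path_pts_height Hp Hz)) erefl.
elim: p s Hp => [|v p IHp] s /=.
  move=> _; exists (fun _ => fst (pos s)); split; first exact: continuity_const.
  move=> h Hh; have -> : h = snd (pos s) by lra.
  by rewrite -surjective_pairing.
move=> /andP [Esv Hp].
have [Xe [Xe_cont Xe_on]] := edge_graph Esv.
have [Xp [Xp_cont Xp_on]] := IHp v Hp.
have hsv := edge_height_lt Esv; have hvt := last_height_le Hp.
have Xe_v : Xe (snd (pos v)) = fst (pos v).
  have [a [Ha Hcrv]] := Xe_on (snd (pos v)) ltac:(lra).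
  have [_ Hv] := edge_curve_ends Esv.
  have a1 : a = 1 by apply: (edge_curve_height_inj Esv Ha); [split; lra | rewrite Hcrv Hv].
  by rewrite a1 Hv in Hcrv; rewrite Hcrv.
have Xp_v : Xp (snd (pos v)) = fst (pos v).
  by rewrite -(path_pts_at_head Hp (Xp_on (snd (pos v)) ltac:(lra)) erefl).
(* Glue the edge below height [snd (pos v)] to the rest of the path above it. *)
exists (fun h => Xe (Rmin h (snd (pos v))) + Xp (Rmax h (snd (pos v))) - fst (pos v)); split.
  apply: continuity_minus; last exact: continuity_const.
  by apply: continuity_plus; apply: continuity_comp;
    [exact: continuity_Rmin_l | exact: Xe_cont | exact: continuity_Rmax_l | exact: Xp_cont].
move=> h Hh; case: (Rle_dec h (snd (pos v))) => Hhv.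
- rewrite Rmin_left // Rmax_right // Xp_v; left.
  have [a [Ha Hcrv]] := Xe_on h ltac:(lra).
  by exists a; split=> //; rewrite Hcrv; congr pair; ring.
- rewrite Rmin_right ?Rmax_left; try lra.
  rewrite Xe_v; have -> : fst (pos v) + Xp h - fst (pos v) = Xp h by ring.
  by right; apply: Xp_on; lra.
Qed.

Lemma path_graph_ends s p X :
  path E s p -> (forall z, pts s p z -> z = (X (snd z), snd z)) ->
  X (snd (pos s)) = fst (pos s) /\ X (snd (pos (last s p))) = fst (pos (last s p)).
Proof.
move=> Hp X_pts; split.
- by rewrite {2}(X_pts _ (path_pts_head Hp)).
- by rewrite {2}(X_pts _ (path_pts_last s p)).
Qed.

Lemma lies_right_of_refl s p : path E s p -> lies_right_of (pts s p) (pts s p).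
Proof. by move=> Hp z w Hz Hw /(path_pts_height_inj Hp Hz Hw) ->; right. Qed.

Lemma lies_right_of_trans s p q (A : point -> Prop) :
  path E s p -> path E s q -> last s p = last s q ->
  lies_right_of A (pts s p) -> lies_right_of (pts s p) (pts s q) -> lies_right_of A (pts s q).
Proof.
move=> Hp Hq Hlast Ap pq z w Hz Hw Hzw.
have [X [_ [X_on _]]] := path_graph Hp.
have Hpw := X_on (snd w) ltac:(rewrite Hlast; exact: path_pts_height Hq Hw).
by have := pq _ _ Hpw Hw erefl; have := Ap _ _ Hz Hpw Hzw => /=; lra.
Qed.

Lemma lies_right_of_cat s c S A M P :
  path E s S -> path E s A -> last s S = c -> last s A = c -> path E c M -> path E c P ->
  lies_right_of (pts s S) (pts s A) -> lies_right_of (pts c M) (pts c P) ->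
  lies_right_of (pts s (S ++ M)) (pts s (A ++ P)).
Proof.
move=> HS HA HlS HlA HM HP SA MP z w.
have HSM : path E s (S ++ M) by rewrite cat_path HS HlS HM.
have HAP : path E s (A ++ P) by rewrite cat_path HA HlA HP.
rewrite (path_pts_cat z HSM) (path_pts_cat w HAP) HlS HlA.
move=> [Hz | Hz] [Hw | Hw] Hzw.
- exact: SA.
- have := path_pts_height HS Hz; have := path_pts_height HP Hw; rewrite HlS => Hw' Hz'.
  have -> : z = pos c by rewrite -HlS; apply: (path_pts_at_last HS Hz); rewrite HlS; lra.
  have -> : w = pos c by apply: (path_pts_at_head HP Hw); lra.
  lra.
- have := path_pts_height HA Hw; have := path_pts_height HM Hz; rewrite HlA => Hz' Hw'.
  have -> : w = pos c by rewrite -HlA; apply: (path_pts_at_last HA Hw); rewrite HlA; lra.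
  have -> : z = pos c by apply: (path_pts_at_head HM Hz); lra.
  lra.
- exact: MP.
Qed.

Lemma path_edge_from_head s c p p1 p2 :
  path E s p -> last s p = c -> s :: p = p1 ++ s :: c :: p2 -> p = [:: c].
Proof.
case: p1 => [|u p1] Hp Hlast /= [].
  move=> Hp_eq; rewrite Hp_eq /= in Hp Hlast *; case/andP: Hp => _ Hp.
  by rewrite (path_last_nil Hp Hlast).
move=> _ Hp_eq; have := path_height_lt Hp (x := s).
by rewrite Hp_eq mem_cat mem_head orbT => /(_ isT); lra.
Qed.

(* An inner common point would be a crossing of two distinct edges, or the edge
   s -> c used by both paths. *)
Lemma internally_disjoint_paths_meet s c A B z :
  path E s A -> path E s B -> last s A = c -> last s B = c -> A != B ->
  (forall w, w \in s :: A -> w \in s :: B -> w = s \/ w = c) ->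
  pts s A z -> pts s B z -> z = pos s \/ z = pos c.
Proof.
move=> HA HB HlA HlB neqAB common HzA HzB.
case: (eqVneq A [::]) => [A0 | A0]; first by rewrite A0 in HzA; left.
case: (eqVneq B [::]) => [B0 | B0]; first by rewrite B0 in HzB; left.
have [x [y [a [p1 [p2 [HA_eq [Exy [Ha Hza]]]]]]]] := path_pts_on_edge HA HzA A0.
have [x' [y' [b [q1 [q2 [HB_eq [Exy' [Hb Hzb]]]]]]]] := path_pts_on_edge HB HzB B0.
have xA : x \in s :: A by rewrite HA_eq mem_cat !in_cons eqxx !orbT.
have yA : y \in s :: A by rewrite HA_eq mem_cat !in_cons eqxx !orbT.
have x'B : x' \in s :: B by rewrite HB_eq mem_cat !in_cons eqxx !orbT.
have y'B : y' \in s :: B by rewrite HB_eq mem_cat !in_cons eqxx !orbT.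
case: (classic ((x, y) = (x', y'))) => [[xx' yy'] | neq_edges].
- subst x' y'.
  have hsc : snd (pos s) < snd (pos c).
    by rewrite -HlA; apply: last_height_lt.
  move: HA_eq HB_eq (edge_height_lt Exy).
  case: (common x xA x'B) => ->; case: (common y yA y'B) => -> HA_eq HB_eq; try lra.
  move=> _; move: neqAB.
  by rewrite (path_edge_from_head HA HlA HA_eq) (path_edge_from_head HB HlB HB_eq) eqxx.
- have [_ [_ [_ planar]]] := drawing.
  have [w [Hw [wxy wxy']]] := planar x y x' y' a b Exy Exy' neq_edges Ha Hb (etrans (esym Hza) Hzb).
  have wA : w \in s :: A by case: wxy => ->.
  have wB : w \in s :: B by case: wxy' => ->.
  by rewrite Hza Hw; case: (common w wA wB) => ->; [left | right].
Qed.

Lemma internally_disjoint_paths_comparable s c A B :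
  path E s A -> path E s B -> last s A = c -> last s B = c ->
  (forall w, w \in s :: A -> w \in s :: B -> w = s \/ w = c) ->
  lies_right_of (pts s A) (pts s B) \/ lies_right_of (pts s B) (pts s A).
Proof.
move=> HA HB HlA HlB common.
case: (eqVneq A B) => [<- | neqAB]; first by left; apply: lies_right_of_refl.
have [XA [XA_cont [XA_on XA_pts]]] := path_graph HA.
have [XB [XB_cont [XB_on XB_pts]]] := path_graph HB.
rewrite HlA in XA_on; rewrite HlB in XB_on.
have A_range z : pts s A z -> snd (pos s) <= snd z <= snd (pos c).
  by rewrite -HlA; apply: path_pts_height.
have B_range z : pts s B z -> snd (pos s) <= snd z <= snd (pos c).
  by rewrite -HlB; apply: path_pts_height.
case: (classic (exists h, snd (pos s) <= h <= snd (pos c) /\ XA h < XB h))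
  => [[h1 [Hh1 lt1]] | none1]; last first.
  left; apply: (lies_right_of_graphs A_range XA_pts XB_pts) => h Hh.
  by apply: Rnot_lt_le => lt; apply: none1; exists h.
case: (classic (exists h, snd (pos s) <= h <= snd (pos c) /\ XB h < XA h))
  => [[h2 [Hh2 lt2]] | none2]; last first.
  right; apply: (lies_right_of_graphs B_range XB_pts XA_pts) => h Hh.
  by apply: Rnot_lt_le => lt; apply: none2; exists h.
have [XA_s XA_c] := path_graph_ends HA XA_pts; rewrite HlA in XA_c.
have [XB_s XB_c] := path_graph_ends HB XB_pts; rewrite HlB in XB_c.
have inner h : snd (pos s) <= h <= snd (pos c) -> XA h <> XB h ->
    snd (pos s) < h < snd (pos c).
  move=> [h_s h_c] neq; split; apply: Rnot_le_lt => h_le; apply: neq.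
  - have -> : h = snd (pos s) by lra.
    by rewrite XA_s XB_s.
  - have -> : h = snd (pos c) by lra.
    by rewrite XA_c XB_c.
have [hs1 h1c] := inner h1 Hh1 ltac:(lra).
have [hs2 h2c] := inner h2 Hh2 ltac:(lra).
have [h [Hh cross]] := continuous_graphs_cross XA_cont XB_cont lt1 lt2.
have := Rmin_glb_lt _ _ _ hs1 hs2; have := Rmax_lub_lt _ _ _ h1c h2c => h_c s_h.
have onA := XA_on h ltac:(lra).
have onB := XB_on h ltac:(lra); rewrite -cross in onB.
by case: (internally_disjoint_paths_meet HA HB HlA HlB neqAB common onA onB)
  => /(f_equal snd) /=; lra.
Qed.

(* Induction on [p]: cut both paths at the first vertex [c] of [p] lying on [q];
   before [c] they are internally disjoint, hence comparable. *)
Lemma dominating_path s p q :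
  path E s p -> path E s q -> last s p = last s q ->
  exists m, path E s m /\ last s m = last s p /\
    lies_right_of (pts s m) (pts s p) /\ lies_right_of (pts s m) (pts s q).
Proof.
have [n] := ubnP (size p); elim: n => // n IHn in s p q *; rewrite ltnS => size_p Hp Hq Hlast.
case: (eqVneq p [::]) => [p0 | p_nonnil].
  have q0 : q = [::] by apply: (path_last_nil Hq); rewrite -Hlast p0.
  by rewrite p0 q0; exists [::]; split=> //; split=> //; split; apply: lies_right_of_refl.
have q_nonnil : q != [::].
  by apply: contraNneq p_nonnil => q0; apply/eqP/(path_last_nil Hp); rewrite Hlast q0.
have last_in r : r != [::] -> last s r \in r by case: r => // v r _; rewrite /= mem_last.
have p_meets_q : has (fun v => v \in q) p.
  by apply/hasP; exists (last s p); [apply: last_in | rewrite Hlast last_in].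
move: size_p Hp Hlast; case/split_find: p_meets_q p_nonnil => c p1 p2 cq p1q _.
move: Hq p1q; case/path.splitP: cq => q1 q2 Hq p1q size_p Hp Hlast.
rewrite cat_path last_rcons in Hp; case/andP: Hp => Hp1 Hp2.
rewrite cat_path last_rcons in Hq; case/andP: Hq => Hq1 Hq2.
rewrite !last_cat !last_rcons in Hlast *.
have size_p2 : (size p2 < n)%N.
  by rewrite size_cat size_rcons addSn in size_p; apply: leq_trans size_p; rewrite ltnS leq_addl.
have [m2 [Hm2 [Hlm2 [m2p2 m2q2]]]] := IHn c p2 q2 size_p2 Hp2 Hq2 Hlast.
have common w : w \in s :: rcons p1 c -> w \in s :: rcons q1 c -> w = s \/ w = c.
  rewrite !(in_cons, mem_rcons) => /or3P [/eqP -> | /eqP -> | wp1]; [by left | by right |].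
  case/or3P => [/eqP -> | /eqP -> | wq1]; [by left | by right |].
  by move/hasPn: p1q => /(_ w wp1); rewrite mem_cat mem_rcons in_cons wq1 orbT.
have [S [HS [HlS [Sp1 Sq1]]]] : exists S, path E s S /\ last s S = c /\
    lies_right_of (pts s S) (pts s (rcons p1 c)) /\ lies_right_of (pts s S) (pts s (rcons q1 c)).
  case: (internally_disjoint_paths_comparable Hp1 Hq1 (last_rcons s p1 c) (last_rcons s q1 c)
    common) => [pq | qp]; [exists (rcons p1 c) | exists (rcons q1 c)];
    by rewrite last_rcons; split=> //; split=> //; split=> //; apply: lies_right_of_refl.
exists (S ++ m2); rewrite cat_path HS HlS Hm2 last_cat HlS Hlm2; split=> //; split=> //.
by split; apply: (lies_right_of_cat HS _ HlS (last_rcons s _ c) Hm2).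
Qed.

Lemma dominating_path_of_list s t p0 (L : seq (seq V)) :
  path E s p0 -> last s p0 = t ->
  exists m, path E s m /\ last s m = t /\
    {in L, forall q, path E s q -> last s q = t -> lies_right_of (pts s m) (pts s q)}.
Proof.
move=> Hp0 Hl0; elim: L => [|q L [m [Hm [Hlm m_dom]]]]; first by exists p0.
case: (classic (path E s q /\ last s q = t)) => [[Hq Hlq] | not_q].
- have [m' [Hm' [Hlm' [m'm m'q]]]] := dominating_path Hm Hq (etrans Hlm (esym Hlq)).
  exists m'; split=> //; split; first by rewrite Hlm' Hlm.
  move=> q'; rewrite in_cons => /predU1P [-> // | Hq'] Hpq' Hlq'.
  exact: lies_right_of_trans Hm Hpq' (etrans Hlm (esym Hlq')) m'm (m_dom q' Hq' Hpq' Hlq').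
- exists m; split=> //; split=> // q'; rewrite in_cons => /predU1P [-> Hq Hlq | ].
    by case: not_q.
  exact: m_dom.
Qed.

Lemma exists_dominating_path s t p0 :
  path E s p0 -> last s p0 = t ->
  exists m, path E s m /\ last s m = t /\
    forall q, path E s q -> last s q = t -> lies_right_of (pts s m) (pts s q).
Proof.
move=> Hp0 Hl0; have [m [Hm [Hlm m_dom]]] := dominating_path_of_list (seqs_upto V #|V|) Hp0 Hl0.
exists m; split=> //; split=> // q Hq Hlq; apply: (m_dom q _ Hq Hlq); apply: mem_seqs_upto.
by have := max_card (mem (s :: q)); rewrite (card_uniqP (upward_path_uniq Hq)); apply: ltnW.
Qed.

Lemma lies_right_of_rightmost s t m q :
  path E s m -> last s m = t -> path E s q -> last s q = t ->
  lies_right_of (pts s m) (pts s q) ->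
  forall z, pts s m z -> pts s q z \/ Right_path pos crv s t q z.
Proof.
move=> Hm Hlm Hq Hlq mq z Hz.
have z_range := path_pts_height Hm Hz; rewrite Hlm in z_range.
have [X [_ [X_on X_pts]]] := path_graph Hq; rewrite Hlq in X_on.
have Hw := X_on (snd z) z_range.
case: (Rle_lt_or_eq_dec _ _ (mq _ _ Hz Hw erefl)) => [lt | eq].
- right; split; first by rewrite Rmin_left ?Rmax_right; lra.
  by move=> u Hu; case: (path_pts_height_inj Hq Hu Hw erefl) => ->.
- by left; rewrite [z]surjective_pairing -eq.
Qed.

Lemma rightmost_pts_sub s t p q :
  path E s p -> last s p = t -> path E s q -> last s q = t ->
  (forall z, pts s p z -> pts s q z \/ Right_path pos crv s t q z) ->
  (forall z, pts s q z -> pts s p z \/ Right_path pos crv s t p z) ->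
  forall z, pts s p z -> pts s q z.
Proof.
move=> Hp Hlp Hq Hlq pq qp z Hz; case: (pq z Hz) => // [[z_range z_right]].
have hst : snd (pos s) <= snd (pos t) by rewrite -Hlp; apply: last_height_le.
rewrite Rmin_left ?Rmax_right in z_range; try lra.
have [X [_ [X_on _]]] := path_graph Hq; rewrite Hlq in X_on.
have Hw := X_on (snd z) z_range; have w_left := z_right _ Hw.
case: (qp _ Hw) => [Hw' | [_ w_right]].
- by move: w_left; rewrite (path_pts_height_inj Hp Hz Hw' erefl) /=; lra.
- by have := w_right (fst z); rewrite -surjective_pairing => /(_ Hz) /=; lra.
Qed.

Lemma edge_curve_vertex s w v a :
  E s w -> in01 a -> crv s w a = pos v -> snd (pos s) < snd (pos v) -> v = w.
Proof.
move=> Esw [Ha0 Ha1] Hcrv Hsv; have [H0 H1] := edge_curve_ends Esw.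
have [pos_inj [_ [no_vertex_inside _]]] := drawing.
case: (Rle_lt_or_eq_dec _ _ Ha0) => [Ha0' | a0]; last first.
  by move: Hcrv; rewrite -a0 H0 => /pos_inj sv; rewrite sv in Hsv; lra.
case: (Rle_lt_or_eq_dec _ _ Ha1) => [Ha1' | a1]; last by apply: pos_inj; rewrite -Hcrv a1 H1.
by case: (no_vertex_inside s w v a Esw (conj Ha0' Ha1') Hcrv).
Qed.

Lemma path_pts_inj s p q :
  path E s p -> path E s q -> last s p = last s q ->
  (forall z, pts s p z -> pts s q z) -> (forall z, pts s q z -> pts s p z) -> p = q.
Proof.
elim: p s q => [|v p IHp] s q Hp Hq Hlast pq qp.
  by rewrite (path_last_nil Hq (esym Hlast)).
case: q Hq Hlast pq qp => [|w q] Hq Hlast pq qp.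
  by have := path_last_nil Hp Hlast.
move: (Hp) (Hq) => /= /andP [Esv Hp'] /andP [Esw Hq'].
have Hsv := edge_height_lt Esv; have Hsw := edge_height_lt Esw.
have vw : v = w.
  case: (pq _ (or_intror (path_pts_head Hp'))) => [[a [Ha Hcrv]] | Hv].
    exact: edge_curve_vertex Esw Ha (esym Hcrv) Hsv.
  case: (qp _ (or_intror (path_pts_head Hq'))) => [[a [Ha Hcrv]] | Hw].
    exact/esym/(edge_curve_vertex Esv Ha (esym Hcrv) Hsw).
  have := path_pts_height Hq' Hv; have := path_pts_height Hp' Hw => Hw_h Hv_h.
  by have [pos_inj _] := drawing; apply/pos_inj/(path_pts_at_head Hq' Hv); lra.
subst w; congr cons; apply: (IHp v q Hp' Hq' Hlast) => z Hz.
- case: (pq z (or_intror Hz)) => // [[a [Ha Hcrv]]].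
  have := edge_curve_height Esv Ha; have := path_pts_height Hp' Hz; rewrite -Hcrv => H1 H2.
  by rewrite (path_pts_at_head Hp' Hz); [apply: path_pts_head | lra].
- case: (qp z (or_intror Hz)) => // [[a [Ha Hcrv]]].
  have := edge_curve_height Esv Ha; have := path_pts_height Hq' Hz; rewrite -Hcrv => H1 H2.
  by rewrite (path_pts_at_head Hq' Hz); [apply: path_pts_head | lra].
Qed.

Lemma exists_rightmost s t p : dipath E s t p -> exists m, rightmost E pos crv s t m.
Proof.
move=> /dipathP [Hp Hlp]; have [m [Hm [Hlm m_dom]]] := exists_dominating_path Hp Hlp.
exists m; split; first exact/dipathP.
by move=> q /dipathP [Hq Hlq]; apply: lies_right_of_rightmost Hm Hlm Hq Hlq (m_dom q Hq Hlq).
Qed.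

Lemma rightmost_unique s t p q :
  rightmost E pos crv s t p -> rightmost E pos crv s t q -> p = q.
Proof.
move=> [/dipathP [Hp Hlp] p_rm] [/dipathP [Hq Hlq] q_rm].
have pq := p_rm q (proj2 (dipathP _ _ _) (conj Hq Hlq)).
have qp := q_rm p (proj2 (dipathP _ _ _) (conj Hp Hlp)).
apply: (path_pts_inj Hp Hq); first by rewrite Hlp Hlq.
- exact: rightmost_pts_sub Hp Hlp Hq Hlq pq qp.
- exact: rightmost_pts_sub Hq Hlq Hp Hlp qp pq.
Qed.

End UpwardPlanarDrawing.

Theorem corollary1 (V : finType) (E : rel V)
    (pos : V -> point) (crv : V -> V -> R -> point) (s t : V) :
  upward_planar_drawing E pos crv ->
  (exists p, dipath E s t p) ->
  exists! p, rightmost E pos crv s t p.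
Proof.
move=> drawing [p Hp]; have [m m_rm] := exists_rightmost drawing Hp.
by exists m; split=> // q q_rm; exact: (rightmost_unique drawing m_rm q_rm).
Qed.
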